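(* Suppose $C=\{C_i\}_{i\in[n]}$ and $C'=\{C'_i\}_{i\in[n]}$ are normalized spectrahedral representations (by $k\times k$ matrices) of $K_C$ and $K_{C'}$ respectively. Then $\mathrm{hdist}(K_C,K_{C'})\le n^{3/2}\cdot\mathrm{mdist}(C,C')$.
   Context: For real symmetric $k\times k$ matrices $C=\{C_i\}_{i\in[n]}$, $K_C=\{x\in\mathbb{R}^n:\sum_iC_ix_i\succeq0\}$. The representation is normalized if $\sum_iC_i=\mathrm{Id}_k$ and each $C_i\succeq0$. $\mathrm{mdist}(C,C')=\max_i\|C_i-C'_i\|$ (operator norm). $\mathrm{hdist}(K,K')=\max(\sup_{x\in\mathcal{B}\cap K}d(x,K'),\sup_{y\in\mathcal{B}\cap K'}d(y,K))$, with $\mathcal{B}$ the Euclidean unit ball of $\mathbb{R}^n$ and $d$ the Euclidean distance. *)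

From mathcomp Require Import all_boot all_order all_algebra.
From mathcomp Require Import boolp classical_sets reals.
Set Implicit Arguments. Unset Strict Implicit. Unset Printing Implicit Defensive.
Import Order.TTheory GRing.Theory Num.Theory.
Local Open Scope ring_scope.
Local Open Scope classical_set_scope.

Section Defs.
Variable R : realType.

Definition enorm (m : nat) (v : 'cV[R]_m) : R := Num.sqrt (\sum_(i < m) v i 0 ^+ 2).

Definition psd (k : nat) (A : 'M[R]_k) : Prop := forall v : 'cV[R]_k, 0 <= (v^T *m A *m v) 0 0.

Definition symmetric (k : nat) (A : 'M[R]_k) : Prop := A^T = A.

Definition opnorm (k : nat) (A : 'M[R]_k) : R :=
  sup [set enorm (A *m v) | v in [set v : 'cV[R]_k | enorm v <= 1]].

Definition spectrahedron (n k : nat) (C : 'I_n -> 'M[R]_k) : set 'cV[R]_n :=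
  [set x | psd (\sum_(i < n) x i 0 *: C i)].

Definition normalized (n k : nat) (C : 'I_n -> 'M[R]_k) : Prop :=
  (forall i, symmetric (C i)) /\ (forall i, psd (C i)) /\ \sum_(i < n) C i = 1%:M.

Definition mdist (n k : nat) (C C' : 'I_n -> 'M[R]_k) : R :=
  \big[Num.max/0]_(i < n) opnorm (C i - C' i).

Definition unit_ball (n : nat) : set 'cV[R]_n := [set x | enorm x <= 1].

Definition dist (n : nat) (x : 'cV[R]_n) (K : set 'cV[R]_n) : R :=
  inf [set enorm (x - y) | y in K].

Definition hdist (n : nat) (K K' : set 'cV[R]_n) : R :=
  Num.max (sup [set dist x K' | x in @unit_ball n `&` K])
          (sup [set dist y K | y in @unit_ball n `&` K']).
End Defs.

From mathcomp Require Import all_boot all_order all_algebra.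
From mathcomp Require Import boolp classical_sets reals.
From mathcomp Require Import ring lra.
Set Implicit Arguments. Unset Strict Implicit.
Import Order.TTheory GRing.Theory Num.Theory.
Local Open Scope ring_scope.

(** Let ε = mdist(C, C') and x ∈ K_C ∩ B, so that |x_i| ≤ 1 for every i. The
    shifted point y = x + nε(1, …, 1) lies in K_{C'}: for every vector v,
    v^T (Σ y_i C'_i) v = v^T (Σ x_i C_i) v - Σ x_i v^T (C_i - C'_i) v + nε |v|²,
    where the first term is nonnegative, each summand of the second is at most
    ε |v|² in absolute value, and the last term comes from Σ C'_i = Id.
    Hence d(x, K_{C'}) ≤ |x - y| = √n · nε, and symmetrically. *)

Section EuclideanNorm.
Variable R : realType.

Definition dotv (m : nat) (a b : 'cV[R]_m) : R := \sum_(i < m) a i 0 * b i 0.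

Lemma enorm_ge0 m (v : 'cV[R]_m) : 0 <= enorm v.
Proof. exact: sqrtr_ge0. Qed.

Lemma sumr_sqr_ge0 m (v : 'cV[R]_m) : 0 <= \sum_(i < m) v i 0 ^+ 2.
Proof. by apply: sumr_ge0 => i _; exact: sqr_ge0. Qed.

Lemma enorm_sqr m (v : 'cV[R]_m) : enorm v ^+ 2 = \sum_(i < m) v i 0 ^+ 2.
Proof. by rewrite sqr_sqrtr // sumr_sqr_ge0. Qed.

Lemma enorm_eq0 m (v : 'cV[R]_m) : (enorm v == 0) = (v == 0).
Proof.
apply/idP/eqP => [|->]; last first.
  by rewrite /enorm big1 ?sqrtr0 // => i _; rewrite mxE expr0n.
rewrite sqrtr_eq0 => sum_le0; apply/matrixP => i j; rewrite ord1 mxE.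
have /psumr_eq0P sqr_eq0 : \sum_(i < m) v i 0 ^+ 2 = 0.
  by apply/eqP; rewrite eq_le sum_le0 sumr_sqr_ge0.
by apply/eqP; rewrite -sqrf_eq0 sqr_eq0 // => l _; exact: sqr_ge0.
Qed.

Lemma enorm0 m : enorm (0 : 'cV[R]_m) = 0.
Proof. by apply/eqP; rewrite enorm_eq0. Qed.

Lemma enorm_coord m (v : 'cV[R]_m) i : `|v i 0| <= enorm v.
Proof.
rewrite -sqrtr_sqr; apply: ler_wsqrtr.
by rewrite (bigD1 i) //= lerDl; apply: sumr_ge0 => j _; exact: sqr_ge0.
Qed.

Lemma enormZ m c (v : 'cV[R]_m) : enorm (c *: v) = `|c| * enorm v.
Proof.
rewrite /enorm -sqrtr_sqr -sqrtrM ?sqr_ge0 // mulr_sumr.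
by congr Num.sqrt; apply: eq_bigr => i _; rewrite mxE exprMn.
Qed.

Lemma enormN m (v : 'cV[R]_m) : enorm (- v) = enorm v.
Proof. by rewrite -scaleN1r enormZ normrN1 mul1r. Qed.

Lemma enorm_const m (c : R) : enorm (const_mx c : 'cV[R]_m) = Num.sqrt m%:R * `|c|.
Proof.
rewrite /enorm (eq_bigr (fun _ => c ^+ 2)) => [|i _]; last by rewrite mxE.
by rewrite sumr_const card_ord -[_ *+ m]mulr_natl sqrtrM ?ler0n // sqrtr_sqr.
Qed.

Lemma dotv_sqr_le m (a b : 'cV[R]_m) :
  dotv a b ^+ 2 <= (\sum_(i < m) a i 0 ^+ 2) * (\sum_(i < m) b i 0 ^+ 2).
Proof.
set A := \sum_(i < m) a i 0 ^+ 2; set B := \sum_(i < m) b i 0 ^+ 2.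
set D := dotv a b.
have [A0 | A_gt0] := eqVneq A 0.
  have a0 i : a i 0 = 0.
    by apply/eqP; rewrite -sqrf_eq0; apply/eqP/(psumr_eq0P _ A0) => // j _; exact: sqr_ge0.
  by rewrite /D /dotv big1 ?expr0n ?A0 ?mul0r // => i _; rewrite a0 mul0r.
have {A_gt0}A_gt0 : 0 < A by rewrite lt0r A_gt0 sumr_sqr_ge0.
have lagrange : \sum_(i < m) (A * b i 0 - D * a i 0) ^+ 2 = A * (A * B - D ^+ 2).
  rewrite (eq_bigr (fun i => A ^+ 2 * b i 0 ^+ 2 - (2 * A * D) * (a i 0 * b i 0)
                             + D ^+ 2 * a i 0 ^+ 2)) => [|i _]; last by ring.
  by rewrite !big_split /= sumrN -!mulr_sumr -/A -/B; rewrite /D /dotv; ring.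
have : 0 <= A * (A * B - D ^+ 2).
  by rewrite -lagrange; apply: sumr_ge0 => i _; exact: sqr_ge0.
by rewrite pmulr_rge0 // subr_ge0.
Qed.

Lemma dotv_le m (a b : 'cV[R]_m) : `|dotv a b| <= enorm a * enorm b.
Proof.
by rewrite -sqrtr_sqr -sqrtrM ?sumr_sqr_ge0 //; apply/ler_wsqrtr/dotv_sqr_le.
Qed.

End EuclideanNorm.

Section OperatorNorm.
Variable R : realType.

Lemma opnorm_bounded m (A : 'M[R]_m) :
  has_ubound [set enorm (A *m v) | v in [set v : 'cV[R]_m | enorm v <= 1]].
Proof.
exists (Num.sqrt (\sum_(i < m) (\sum_(j < m) `|A i j|) ^+ 2)).
move=> _ [v /= v_le1 <-]; apply: ler_wsqrtr; apply: ler_sum => i _.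
have row_le : `|(A *m v) i 0| <= \sum_(j < m) `|A i j|.
  rewrite mxE; apply: le_trans (ler_norm_sum _ _ _) _.
  apply: ler_sum => j _; rewrite normrM ler_piMr //.
  exact: le_trans (enorm_coord _ _) v_le1.
by rewrite -real_normK ?num_real // lerXn2r ?nnegrE ?normr_ge0 // (le_trans _ row_le).
Qed.

Lemma opnorm_ge0 m (A : 'M[R]_m) : 0 <= opnorm A.
Proof.
apply: (le_trans (enorm_ge0 (A *m 0))); apply: ub_le_sup; first exact: opnorm_bounded.
by exists 0; rewrite //= enorm0.
Qed.

Lemma enorm_mulmx_le m (A : 'M[R]_m) v : enorm (A *m v) <= opnorm A * enorm v.
Proof.
have [/eqP v0 | v_neq0] := eqVneq (enorm v) 0.
  by move: v0; rewrite enorm_eq0 => /eqP->; rewrite mulmx0 enorm0 mulr0.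
have v_gt0 : 0 < enorm v by rewrite lt0r v_neq0 enorm_ge0.
have v_unit : enorm ((enorm v)^-1 *: v) <= 1.
  by rewrite enormZ ger0_norm ?invr_ge0 ?enorm_ge0 // mulVf.
have : enorm (A *m ((enorm v)^-1 *: v)) <= opnorm A.
  by apply: ub_le_sup; [exact: opnorm_bounded | exists ((enorm v)^-1 *: v)].
by rewrite -scalemxAr enormZ ger0_norm ?invr_ge0 ?enorm_ge0 // ler_pdivrMl // mulrC.
Qed.

Lemma opnormN m (A : 'M[R]_m) : opnorm (- A) = opnorm A.
Proof.
rewrite /opnorm; congr sup; apply/seteqP; split=> _ [v v_le1 <-];
  by exists v => //; rewrite mulNmx enormN.
Qed.

Lemma opnormB m (A B : 'M[R]_m) : opnorm (A - B) = opnorm (B - A).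
Proof. by rewrite -opnormN opprB. Qed.

End OperatorNorm.

Section QuadraticForm.
Variables (R : realType) (m : nat).
Implicit Types (A B : 'M[R]_m) (v : 'cV[R]_m).

Definition qform A v : R := (v^T *m A *m v) 0 0.

Lemma qformE A v : qform A v = dotv v (A *m v).
Proof. by rewrite /qform -mulmxA mxE; apply: eq_bigr => j _; rewrite mxE. Qed.

Lemma qformD A B v : qform (A + B) v = qform A v + qform B v.
Proof. by rewrite /qform mulmxDr mulmxDl mxE. Qed.

Lemma qform0 v : qform 0 v = 0.
Proof. by rewrite /qform mulmx0 mul0mx mxE. Qed.

Lemma qformZ c A v : qform (c *: A) v = c * qform A v.
Proof. by rewrite /qform -scalemxAr -scalemxAl mxE. Qed.

Lemma qformB A B v : qform (A - B) v = qform A v - qform B v.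
Proof. by rewrite qformD -scaleN1r qformZ mulN1r. Qed.

Lemma qform_sum n (A : 'I_n -> 'M[R]_m) v :
  qform (\sum_(i < n) A i) v = \sum_(i < n) qform (A i) v.
Proof. exact: (big_morph (qform^~ v) (fun A B => qformD A B v) (qform0 v)). Qed.

Lemma qform_sumZ n (c : 'I_n -> R) (A : 'I_n -> 'M[R]_m) v :
  qform (\sum_(i < n) c i *: A i) v = \sum_(i < n) c i * qform (A i) v.
Proof. by rewrite qform_sum; apply: eq_bigr => i _; rewrite qformZ. Qed.

Lemma qform1 v : qform 1%:M v = enorm v ^+ 2.
Proof.
by rewrite qformE mul1mx enorm_sqr; apply: eq_bigr => i _; rewrite expr2.
Qed.

Lemma qform_le_opnorm A v : `|qform A v| <= opnorm A * enorm v ^+ 2.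
Proof.
rewrite qformE (le_trans (dotv_le _ _)) // mulrC expr2 mulrA.
by rewrite ler_wpM2r ?enorm_ge0 ?enorm_mulmx_le.
Qed.

End QuadraticForm.

Section Spectrahedron.
Variables (R : realType) (n k : nat).
Implicit Types (x : 'cV[R]_n).

Lemma spectrahedron0 (C : 'I_n -> 'M[R]_k) : spectrahedron C 0.
Proof.
by move=> v; rewrite -/(qform _ v) qform_sumZ big1 // => i _; rewrite mxE mul0r.
Qed.

Lemma spectrahedron_shift (C C' : 'I_n -> 'M[R]_k) eps x :
  \sum_(i < n) C' i = 1%:M -> (forall i, opnorm (C i - C' i) <= eps) ->
  (forall i, `|x i 0| <= 1) -> spectrahedron C x ->
  spectrahedron C' (x + const_mx (n%:R * eps)).
Proof.
move=> sumC' dC x_le1 Cx v; rewrite -/(qform _ v) qform_sumZ.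
have perturbation : \sum_(i < n) x i 0 * qform (C i - C' i) v <= n%:R * eps * enorm v ^+ 2.
  rewrite -mulrA mulr_natl -[X in _ *+ X](card_ord n) -sumr_const.
  apply: ler_sum => i _; apply: le_trans (ler_norm _) _; rewrite normrM mulrC.
  apply: le_trans (ler_piMr (normr_ge0 _) (x_le1 i)) _.
  exact: le_trans (qform_le_opnorm _ _) (ler_wpM2r (sqr_ge0 _) (dC i)).
have identity : \sum_(i < n) qform (C' i) v = enorm v ^+ 2.
  by rewrite -qform1 -sumC' qform_sum.
have -> : \sum_(i < n) (x + const_mx (n%:R * eps)) i 0 * qform (C' i) v =
    qform (\sum_(i < n) x i 0 *: C i) v
    - \sum_(i < n) x i 0 * qform (C i - C' i) v + n%:R * eps * enorm v ^+ 2.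
  rewrite qform_sumZ -sumrB -identity mulr_sumr -big_split /=.
  by apply: eq_bigr => i _; rewrite !mxE qformB; ring.
by have := Cx v; rewrite -/(qform _ v); lra.
Qed.

Lemma dist_le x (K : set 'cV[R]_n) y : K y -> dist x K <= enorm (x - y).
Proof.
move=> Ky; apply: ge_inf; last by exists y.
by exists 0 => _ [z _ <-]; exact: enorm_ge0.
Qed.

Lemma dist_spectrahedron_le (C C' : 'I_n -> 'M[R]_k) eps x :
  0 <= eps -> \sum_(i < n) C' i = 1%:M -> (forall i, opnorm (C i - C' i) <= eps) ->
  enorm x <= 1 -> spectrahedron C x ->
  dist x (spectrahedron C') <= n%:R * Num.sqrt n%:R * eps.
Proof.
move=> eps_ge0 sumC' dC x_le1 Cx.
have x_coord_le1 i : `|x i 0| <= 1 by exact: le_trans (enorm_coord _ _) x_le1.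
apply: le_trans (dist_le x (spectrahedron_shift sumC' dC x_coord_le1 Cx)) _.
rewrite opprD addrA subrr add0r enormN enorm_const ger0_norm ?mulr_ge0 //.
by rewrite mulrCA mulrA.
Qed.

Lemma hdist_le (K K' : set 'cV[R]_n) r :
  K 0 -> K' 0 ->
  (forall x, enorm x <= 1 -> K x -> dist x K' <= r) ->
  (forall y, enorm y <= 1 -> K' y -> dist y K <= r) ->
  hdist K K' <= r.
Proof.
have ball0 : enorm (0 : 'cV[R]_n) <= 1 by rewrite enorm0.
move=> K0 K'0 dK dK'; rewrite /hdist ge_max; apply/andP; split.
- apply: ge_sup; first by exists (dist 0 K'), 0.
  by move=> _ [x [x_le1 Kx] <-]; exact: dK.
- apply: ge_sup; first by exists (dist 0 K), 0.
  by move=> _ [y [y_le1 K'y] <-]; exact: dK'.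
Qed.

Lemma mdist_ge0 (C C' : 'I_n -> 'M[R]_k) : 0 <= mdist C C'.
Proof.
apply: (big_ind (fun y => 0 <= y)) => // [a b a0 b0 | i _]; last exact: opnorm_ge0.
by rewrite le_max a0.
Qed.

Lemma opnorm_le_mdist (C C' : 'I_n -> 'M[R]_k) i : opnorm (C i - C' i) <= mdist C C'.
Proof. by rewrite /mdist (bigD1 i) //= le_max lexx. Qed.

Lemma mdistC (C C' : 'I_n -> 'M[R]_k) : mdist C C' = mdist C' C.
Proof. by apply: eq_bigr => i _; rewrite opnormB. Qed.

End Spectrahedron.

Theorem lemma13 (R : realType) (n k : nat) (C C' : 'I_n -> 'M[R]_k) :
  normalized C -> normalized C' ->
  hdist (spectrahedron C) (spectrahedron C') <=
    (n%:R * Num.sqrt (n%:R : R)) * mdist C C'.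
Proof.
move=> [_ [_ sumC]] [_ [_ sumC']].
apply: hdist_le; try exact: spectrahedron0.
- move=> x; apply: dist_spectrahedron_le sumC' _; first exact: mdist_ge0.
  exact: opnorm_le_mdist.
- move=> y; rewrite mdistC; apply: dist_spectrahedron_le sumC _; first exact: mdist_ge0.
  exact: opnorm_le_mdist.
Qed.
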